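(* Let $q=2^m$, let $k\in\mathbb{F}_q$ with $Tr(k)=1$, let $i\in\mathbb{F}_{q^2}\setminus\mathbb{F}_q$ with $i^2=i+k$, and let $\alpha=A+iB$, $\beta=C+iD$ with $A,B,C,D\in\mathbb{F}_q$ and $\alpha\beta\neq 0$. Then the following are equivalent: (i) $A=\frac{BC+BD+B}{D}$ with $D\neq 0$, $BD(B+D)\neq 0$, $kD^2+C^2+CD+1=0$, and $Tr\left(1+\frac{D}{B^2}\right)=0$; (ii) $\beta=\alpha^{q-1}\in\mathbb{F}_{q^2}\setminus\mathbb{F}_q$, $Tr\left(1+\frac{1}{\alpha^{q+1}}\right)=0$, and $\alpha+\alpha^q\neq\beta+\beta^q$.
   Context: $Tr:\mathbb{F}_q\to\mathbb{F}_2$ is the absolute trace $Tr(z)=z+z^2+\cdots+z^{2^{m-1}}$. *)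

From HB Require Import structures.
From mathcomp Require Import all_boot all_order all_algebra all_field.
Set Implicit Arguments. Unset Strict Implicit. Unset Printing Implicit Defensive.
Import GRing.Theory.
Local Open Scope ring_scope.

(* F_{q^2} is modelled as a finite field L with #|L| = q^2, q = 2^m;
   F_q is its unique subfield of order q, i.e. {x | x^q = x}. *)

Definition In_Fq (L : finFieldType) (m : nat) (x : L) : Prop := x ^+ (2 ^ m)%N = x.

Definition Tr (L : finFieldType) (m : nat) (z : L) : L :=
  \sum_(j < m) z ^+ (2 ^ j)%N.

(* In characteristic 2 the Frobenius
   x |-> x^q sends i to the other root i + 1 of X^2 + X + k, hence acts on
   coordinates by (a, b) |-> (a + b, b).  The equation beta = alpha^(q-1),
   i.e. beta alpha + alpha^q = 0, therefore splits into two equations over F_q: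
   the i-coordinate says A D = B C + B D + B, and given this, D times the
   1-coordinate equals B (k D^2 + C^2 + C D + 1).  Under the same relation the
   norm alpha^(q+1) = A^2 + A B + k B^2 equals B^2 / D, while
   alpha + alpha^q = B, beta + beta^q = D, and beta lies in F_q iff D = 0.
   The hypothesis Tr(k) = 1 only guarantees that such an i exists, and the
   cardinality of L is only used to get characteristic 2. *)

From mathcomp Require Import all_boot all_order all_algebra all_field.
From mathcomp Require Import ring.

Set Implicit Arguments.
Unset Strict Implicit.
Import GRing.Theory.
Local Open Scope ring_scope.

Section CharTwoIdentities.

Variable R : comNzRingType.
Hypothesis pcharR2 : 2 \in [pchar R].

Lemma eq_mod_double (x y z : R) : x = y + z *+ 2 -> x = y.
Proof. by rewrite mulr2n addrr_pchar2 ?addr0. Qed.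

Lemma addr_eq0_pchar2 (x y : R) : (x + y == 0) = (x == y).
Proof. by rewrite addr_eq0 oppr_pchar2. Qed.

Variables (k A B C D : R).
Hypothesis AD_eq : A * D = B * C + B * D + B.

Lemma first_coord_mul :
  D * (C * A + k * D * B + A + B) = B * (k * D ^+ 2 + C ^+ 2 + C * D + 1).
Proof.
have -> : D * (C * A + k * D * B + A + B)
          = C * (A * D) + k * D ^+ 2 * B + A * D + D * B by ring.
by rewrite AD_eq; apply: (@eq_mod_double _ _ (B * (C + D))); ring.
Qed.

Lemma norm_mul_sqr :
  (A ^+ 2 + A * B + k * B ^+ 2) * D ^+ 2
  = B ^+ 2 * (k * D ^+ 2 + C ^+ 2 + C * D + 1 + D).
Proof.
have -> : (A ^+ 2 + A * B + k * B ^+ 2) * D ^+ 2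
          = (A * D) ^+ 2 + (A * D) * (B * D) + k * B ^+ 2 * D ^+ 2 by ring.
rewrite AD_eq; apply: (@eq_mod_double _ _ (B ^+ 2 * (C * D + C + D + D ^+ 2))).
by ring.
Qed.

End CharTwoIdentities.

Section QuadraticExtension.

Variables (L : finFieldType) (m : nat).
Hypothesis pcharL2 : 2 \in [pchar L].
Local Notation q := (2 ^ m)%N.
Local Notation Fq := (In_Fq m).

Lemma exprDq (x y : L) : (x + y) ^+ q = x ^+ q + y ^+ q.
Proof. by apply: exprDn_pchar; rewrite pnatX pnatE ?pcharL2. Qed.

Lemma In_FqD (x y : L) : Fq x -> Fq y -> Fq (x + y).
Proof. by rewrite /In_Fq exprDq => -> ->. Qed.

Lemma In_FqM (x y : L) : Fq x -> Fq y -> Fq (x * y).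
Proof. by rewrite /In_Fq exprMn => -> ->. Qed.

Variables (k i : L).
Hypotheses (Fq_k : Fq k) (i_notin_Fq : ~ Fq i) (sqr_i : i ^+ 2 = i + k).

Lemma artin_schreier_roots (u : L) : u ^+ 2 = u + k -> u = i \/ u = i + 1.
Proof.
move=> sqr_u.
have : (u - i) * (u - (i + 1)) = 0.
  have -> : (u - i) * (u - (i + 1)) = (u ^+ 2 - (u + k)) - (i ^+ 2 - (i + k)).
    by apply: (@eq_mod_double _ pcharL2 _ _ (i ^+ 2 - i * u)); ring.
  by rewrite sqr_u sqr_i !subrr.
by move/eqP; rewrite mulf_eq0 !subr_eq0 => /orP[] /eqP; [left | right].
Qed.

Lemma exprq_i : i ^+ q = i + 1.
Proof.
have : (i ^+ q) ^+ 2 = i ^+ q + k.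
  by rewrite -exprM mulnC exprM sqr_i exprDq Fq_k.
by case/artin_schreier_roots => // iq_i; case: i_notin_Fq.
Qed.

Lemma exprq_coord (a b : L) : Fq a -> Fq b -> (a + i * b) ^+ q = (a + b) + i * b.
Proof. by move=> Fq_a Fq_b; rewrite exprDq exprMn Fq_a Fq_b exprq_i; ring. Qed.

Lemma add_exprq_coord (a b : L) : Fq a -> Fq b -> (a + i * b) + (a + i * b) ^+ q = b.
Proof.
move=> Fq_a Fq_b; rewrite exprq_coord //.
by apply: (@eq_mod_double _ pcharL2 _ _ (a + i * b)); ring.
Qed.

Lemma In_Fq_coord (a b : L) : Fq a -> Fq b -> Fq (a + i * b) <-> b = 0.
Proof.
move=> Fq_a Fq_b; rewrite /In_Fq exprq_coord // addrAC.
by split=> [|->]; [rewrite -{2}[a + i * b]addr0 => /addrI | rewrite addr0].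
Qed.

Lemma coord_eq0 (a b : L) : Fq a -> Fq b -> a + i * b = 0 -> a = 0 /\ b = 0.
Proof.
move=> Fq_a Fq_b ab0.
have b0 : b = 0.
  have := congr1 (fun x => x ^+ q) ab0.
  by rewrite /= exprq_coord // expr0n expn_eq0 addrAC ab0 add0r.
by split=> //; move: ab0; rewrite b0 mulr0 addr0.
Qed.

Lemma norm_coord (a b : L) :
  Fq a -> Fq b -> (a + i * b) ^+ (q + 1) = a ^+ 2 + a * b + k * b ^+ 2.
Proof.
move=> Fq_a Fq_b; rewrite exprD expr1 exprq_coord //.
have -> : (a + b + i * b) * (a + i * b)
          = a ^+ 2 + a * b + i ^+ 2 * b ^+ 2 + i * b ^+ 2 + (i * a * b) *+ 2 by ring.
rewrite sqr_i; apply: (@eq_mod_double _ pcharL2 _ _ (i * a * b + i * b ^+ 2)).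
by ring.
Qed.

Section Coordinates.

Variables A B C D : L.
Hypotheses (Fq_A : Fq A) (Fq_B : Fq B) (Fq_C : Fq C) (Fq_D : Fq D).
Local Notation alpha := (A + i * B).
Local Notation beta := (C + i * D).

Lemma mul_add_exprq :
  beta * alpha + alpha ^+ q
  = (C * A + k * D * B + A + B) + i * (A * D + (B * C + B * D + B)).
Proof.
rewrite exprq_coord //.
have -> : beta * alpha = C * A + i * (C * B + D * A) + i ^+ 2 * (D * B) by ring.
by rewrite sqr_i; ring.
Qed.

Lemma exprq_pred_coordP :
  alpha != 0 ->
  beta = alpha ^+ (q - 1) <->
  C * A + k * D * B + A + B = 0 /\ A * D = B * C + B * D + B.
Proof.
move=> alpha_neq0.
have -> : beta = alpha ^+ (q - 1) <-> beta * alpha + alpha ^+ q = 0.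
  rewrite subn1 -[in alpha ^+ q](prednK (expn_gt0 2 m)) exprSr -mulrDl.
  split=> [->|/eqP]; first by rewrite (addrr_pchar2 pcharL2) mul0r.
  by rewrite mulf_eq0 (negbTE alpha_neq0) orbF (addr_eq0_pchar2 pcharL2) => /eqP.
have Fq_X1 : Fq (C * A + k * D * B + A + B).
  by do ![apply: In_FqD | apply: In_FqM].
have Fq_X2 : Fq (A * D + (B * C + B * D + B)).
  by do ![apply: In_FqD | apply: In_FqM].
rewrite mul_add_exprq; split=> [/coord_eq0 [] // -> /eqP|[-> /eqP]].
  by rewrite (addr_eq0_pchar2 pcharL2) => /eqP.
by rewrite -(addr_eq0_pchar2 pcharL2) => /eqP ->; rewrite mulr0 addr0.
Qed.

Lemma inv_norm_coord :
  A * D = B * C + B * D + B -> k * D ^+ 2 + C ^+ 2 + C * D + 1 = 0 ->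
  B != 0 -> D != 0 -> 1 / alpha ^+ (q + 1) = D / B ^+ 2.
Proof.
move=> AD_eq K0 B_neq0 D_neq0.
have := norm_mul_sqr pcharL2 k AD_eq; rewrite K0 add0r -norm_coord //.
move=> /(canRL (mulfK (expf_neq0 2 D_neq0))) ->.
by rewrite div1r invf_div; field; rewrite D_neq0 B_neq0.
Qed.

End Coordinates.

End QuadraticExtension.

Theorem proposition5 (L : finFieldType) (m : nat)
  (HL : #|L| = ((2 ^ m) ^ 2)%N)
  (k i A B C D : L)
  (Hk : In_Fq m k) (HTk : Tr m k = 1)
  (Hi : ~ In_Fq m i) (Hi2 : i ^+ 2 = i + k)
  (HA : In_Fq m A) (HB : In_Fq m B) (HC : In_Fq m C) (HD : In_Fq m D)
  (Hab : (A + i * B) * (C + i * D) != 0) :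
  let q := (2 ^ m)%N in
  let alpha := A + i * B in
  let beta := C + i * D in
  (A = (B * C + B * D + B) / D /\ D != 0 /\ B * D * (B + D) != 0 /\
   k * D ^+ 2 + C ^+ 2 + C * D + 1 = 0 /\ Tr m (1 + D / B ^+ 2) = 0)
  <->
  (beta = alpha ^+ (q - 1) /\ ~ In_Fq m beta /\
   Tr m (1 + 1 / alpha ^+ (q + 1)) = 0 /\
   alpha + alpha ^+ q != beta + beta ^+ q).
Proof.
move=> q alpha beta.
have pcharL2 : 2 \in [pchar L].
  by apply: (@card_finPcharP _ 2 (m * 2)); rewrite ?HL ?expnM.
have alpha_neq0 : alpha != 0 by move: Hab; rewrite mulf_eq0 negb_or => /andP[].
have BD_neq0 : B * D * (B + D) != 0 <-> B != 0 /\ D != 0 /\ B != D.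
  rewrite !mulf_eq0 (addr_eq0_pchar2 pcharL2) !negb_or.
  by split=> [/andP[/andP[-> ->] ->] | [-> [-> ->]]].
rewrite (exprq_pred_coordP _ Hk Hi Hi2) // (In_Fq_coord _ Hk Hi Hi2) //.
rewrite !(add_exprq_coord _ Hk Hi Hi2) // BD_neq0.
split=> [[A_eq [D_neq0 [[B_neq0 [_ B_neq_D]] [K0 Tr0]]]]
        | [[X1_0 AD_eq] [/eqP D_neq0 [Tr0 B_neq_D]]]].
- have AD_eq : A * D = B * C + B * D + B by rewrite A_eq divfK.
  rewrite (inv_norm_coord pcharL2 Hk Hi Hi2 HA HB AD_eq K0) //.
  split; last by split=> //; apply/eqP.
  split=> //; apply/eqP; rewrite -(mulIr_eq0 _ (mulIf D_neq0)) mulrC.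
  by rewrite (first_coord_mul pcharL2 k AD_eq) K0 mulr0.
- have B_neq0 : B != 0.
    apply: contra_neq alpha_neq0 => B0; rewrite /alpha B0 mulr0 addr0.
    by apply/eqP; rewrite -(mulIr_eq0 _ (mulIf D_neq0)) AD_eq B0 !mul0r !addr0.
  have K0 : k * D ^+ 2 + C ^+ 2 + C * D + 1 = 0.
    apply/eqP; rewrite -(mulrI_eq0 _ (mulfI B_neq0)).
    by rewrite -(first_coord_mul pcharL2 k AD_eq) X1_0 mulr0.
  rewrite (inv_norm_coord pcharL2 Hk Hi Hi2 HA HB AD_eq K0) // in Tr0.
  by do !split=> //; rewrite -AD_eq mulfK.
Qed.
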